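(* Let $(\Omega,\mathcal{A},\mu)$ be a measure space and $F:\mathbb{R}^m\rightrightarrows\mathbb{R}^n$ a set-valued map. Let $(x_k)$, $(y_k)$ be sequences of measurable functions such that $x_k\to x$ $\mu$-almost everywhere for some function $x:\Omega\to\mathbb{R}^m$, $y_k\rightharpoonup y$ weakly in $L^1(\mu;\mathbb{R}^n)$, and $y_k(t)\in F(x_k(t))$ for $\mu$-almost all $t\in\Omega$. Then $y(t)\in(\operatorname{conv}^\infty F)(x(t))$ for $\mu$-almost all $t\in\Omega$.
   Context: For sets $A_k\subset\mathbb{R}^n$, the outer limit is $\limsup_{k\to\infty}A_k:=\{y:\ \exists$ a subsequence $k_j$ and $y_{k_j}\in A_{k_j}$ with $y_{k_j}\to y\}$. For $U\subset\mathbb{R}^m$, $F(U):=\bigcup_{x'\in U}F(x')$; $\operatorname{conv}$ denotes convex hull; $B_r(0)$ is the open ball of radius $r$. Define $(\operatorname{conv}^\infty F)(x):=\limsup_{k\to\infty}\operatorname{conv}\big(F(x+B_{1/k}(0))\big)$. *)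

From HB Require Import structures.
From mathcomp Require Import all_boot all_order all_algebra.
From mathcomp Require Import all_classical all_reals all_analysis.
Set Implicit Arguments. Unset Strict Implicit. Unset Printing Implicit Defensive.
Import Order.TTheory GRing.Theory Num.Theory.
Import numFieldNormedType.Exports.
Local Open Scope classical_set_scope.
Local Open Scope ring_scope.

(* R^n is modelled by row vectors 'rV[R]_n. *)

Definition enorm {R : realType} {n : nat} (v : 'rV[R]_n) : R :=
  Num.sqrt (\sum_(i < n) v ord0 i ^+ 2).

Definition eball {R : realType} {n : nat} (x : 'rV[R]_n) (r : R) : set 'rV[R]_n :=
  [set x' | enorm (x' - x) < r].

Definition svimage {R : realType} {m n : nat}
  (F : 'rV[R]_m -> set 'rV[R]_n) (U : set 'rV[R]_m) : set 'rV[R]_n :=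
  \bigcup_(x' in U) F x'.

Definition conv_hull {R : realType} {n : nat} (A : set 'rV[R]_n) : set 'rV[R]_n :=
  [set z | exists (N : nat) (lam : 'I_N -> R) (p : 'I_N -> 'rV[R]_n),
      (forall i, 0 <= lam i) /\ \sum_(i < N) lam i = 1 /\
      (forall i, A (p i)) /\ z = \sum_(i < N) lam i *: p i].

Definition outer_limit {R : realType} {n : nat} (A : nat -> set 'rV[R]_n)
  : set 'rV[R]_n :=
  [set y | exists (phi : nat -> nat) (z : nat -> 'rV[R]_n),
      (forall j, (phi j < phi j.+1)%N) /\ (forall j, A (phi j) (z j)) /\
      z @ \oo --> y].

(* (conv^infty F)(x) = limsup_k conv(F(x + B_{1/k}(0))), k = 1,2,...
   (indexed here by k.+1). Note x + B_r(0) = B_r(x). *)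
Definition conv_infty {R : realType} {m n : nat}
  (F : 'rV[R]_m -> set 'rV[R]_n) (x : 'rV[R]_m) : set 'rV[R]_n :=
  outer_limit (fun k => conv_hull (svimage F (eball x (k.+1%:R)^-1))).

(* Measurability of an R^m-valued function (componentwise, equivalently Borel). *)
Definition vmeasurable {d : measure_display} {T : measurableType d}
  {R : realType} {m : nat} (f : T -> 'rV[R]_m) : Prop :=
  forall i : 'I_m, measurable_fun setT (fun t => f t ord0 i).

Definition vintegrable {d : measure_display} {T : measurableType d}
  {R : realType} (mu : {measure set T -> \bar R}) {n : nat}
  (f : T -> 'rV[R]_n) : Prop :=
  forall i : 'I_n, mu.-integrable setT (fun t => (f t ord0 i)%:E).

(* Continuous linear functionals on L^1(mu; R^n): maps which are linear on
   integrable functions and bounded by C * ||f||_{L^1}. *)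
Definition L1_dual {d : measure_display} {T : measurableType d}
  {R : realType} (mu : {measure set T -> \bar R}) {n : nat}
  (phi : (T -> 'rV[R]_n) -> R) : Prop :=
  (forall f g, vintegrable mu f -> vintegrable mu g ->
      phi (fun t => f t + g t) = phi f + phi g) /\
  (forall (a : R) f, vintegrable mu f -> phi (fun t => a *: f t) = a * phi f) /\
  (exists C : R, forall f, vintegrable mu f ->
      (`|phi f|%:E <= C%:E * \int[mu]_t (enorm (f t))%:E)%E).

Definition weak_L1_cvg {d : measure_display} {T : measurableType d}
  {R : realType} (mu : {measure set T -> \bar R}) {n : nat}
  (y_ : nat -> T -> 'rV[R]_n) (y : T -> 'rV[R]_n) : Prop :=
  (forall k, vintegrable mu (y_ k)) /\ vintegrable mu y /\
  (forall phi, L1_dual mu phi -> (fun k => phi (y_ k)) @ \oo --> phi y).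

From HB Require Import structures.
From mathcomp Require Import all_boot all_order all_algebra.
From mathcomp Require Import all_classical all_reals all_analysis.
From mathcomp Require Import ring lra measurable_realfun.
Import Order.TTheory GRing.Theory Num.Theory.
Import numFieldNormedType.Exports.
Local Open Scope classical_set_scope.
Local Open Scope ring_scope.
Set Implicit Arguments. Unset Strict Implicit.

(* Fix N and put u_j := y_(j+N).  The heart of the proof is that, for almost
   every t, the point y(t) is the limit of points lying in every convex set
   that contains the tail {u_j(t) | j}; since x_k(t) -> x(t) and
   y_k(t) \in F(x_k(t)), such tails lie in F(B_r(x(t))) for N large, which
   gives y(t) \in (conv^oo F)(x(t)) ([conv_infty_of_tail_limits]).

   The approximating points come from a greedy scheme, run pointwise in t:
   starting from u_0, each step keeps the candidate closest to w := y(t)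
   among finitely many, namely midpoints with earlier iterates and moves of
   length 1/(l+1) towards some u_j.  The iterates converge to a point p(t)
   with <w - p, u_j - p> <= 0 for all j ([greedy_limit_variational]), i.e.
   p(t) is the projection of w on the closed convex hull of the u_j(t);
   since each step is a finite comparison, p is measurable.

   Finally, testing the weak convergence u_j -> y against the bounded
   function 1_E (y - p) shows that each set E on which |y - p|^2 is bounded
   away from 0 and oo is null ([null_of_weak_separation]), so that p = y
   almost everywhere ([projection_residual_null]). *)

Section Euclidean.
Variables (R : realType) (n : nat).
Local Notation V := 'rV[R]_n.
Implicit Types a b c e : V.

Definition dotv a b : R := \sum_(i < n) a ord0 i * b ord0 i.
Definition sqv a : R := dotv a a.

Local Ltac coordinatewise := rewrite /sqv /dotv ?mulr_sumr;
  repeat (rewrite -big_split /= || rewrite -sumrB /=);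
  apply: eq_bigr => i _; rewrite ?mxE.

Lemma sqv_ge0 a : 0 <= sqv a.
Proof. by apply: sumr_ge0 => i _; rewrite -expr2 sqr_ge0. Qed.

Lemma enormE a : enorm a = Num.sqrt (sqv a).
Proof. by rewrite /enorm; congr Num.sqrt; apply: eq_bigr => i _; rewrite expr2. Qed.

Lemma sqv_subC a b : sqv (a - b) = sqv (b - a).
Proof. by coordinatewise; ring. Qed.

Lemma dotvDr a b c : dotv a (b + c) = dotv a b + dotv a c.
Proof. by coordinatewise; ring. Qed.

Lemma dotvZr a b (s : R) : dotv a (s *: b) = s * dotv a b.
Proof. by coordinatewise; ring. Qed.

Lemma dotvBr a b c : dotv a (b - c) = dotv a b - dotv a c.
Proof. by coordinatewise; ring. Qed.

Lemma dotv_shiftr a b c e : dotv a (b - c) = dotv a (b - e) - dotv a (c - e).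
Proof. by coordinatewise; ring. Qed.

Lemma sqv_parallelogram w b c : sqv (b - c) =
  2 * sqv (w - b) + 2 * sqv (w - c) - 4 * sqv (w - 2^-1 *: (b + c)).
Proof. by coordinatewise; field. Qed.

Lemma sqv_segment w b c (s : R) : sqv (w - ((1 - s) *: b + s *: c)) =
  sqv (w - b) - 2 * s * dotv (w - b) (c - b) + s ^+ 2 * sqv (c - b).
Proof. by coordinatewise; ring. Qed.

Lemma coord_sqr_le_sqv a i : a ord0 i ^+ 2 <= sqv a.
Proof.
rewrite /sqv /dotv (bigD1 i) //= -expr2 lerDl.
by apply: sumr_ge0 => j _; rewrite -expr2 sqr_ge0.
Qed.

Lemma coord_le_enorm a i : `|a ord0 i| <= enorm a.
Proof. by rewrite enormE -sqrtr_sqr; apply: ler_wsqrtr; exact: coord_sqr_le_sqv. Qed.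

Lemma coord_le_of_sqv_le a (L : R) i : 1 <= L -> sqv a <= L -> `|a ord0 i| <= L.
Proof.
move=> L1 aL; have := coord_sqr_le_sqv a i.
rewrite -real_normK ?num_real // => h; have : 0 <= `|a ord0 i| by [].
nra.
Qed.

Lemma sqv_eq0 a : sqv a = 0 -> a = 0.
Proof.
move=> a0; apply/matrixP => i j; rewrite (ord1 i) mxE; apply/eqP.
by rewrite -sqrf_eq0 eq_le sqr_ge0 andbT -a0 coord_sqr_le_sqv.
Qed.

Lemma dotv_le_enorm a b (B : R) : (forall i, `|a ord0 i| <= B) ->
  `|dotv a b| <= n%:R * B * enorm b.
Proof.
move=> aB; apply: le_trans (ler_norm_sum _ _ _) _.
apply: (@le_trans _ _ (\sum_(i < n) B * enorm b)).
  apply: ler_sum => i _; rewrite normrM.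
  by apply: ler_pM => //; exact: coord_le_enorm.
by rewrite sumr_const card_ord -mulrA mulr_natl.
Qed.

Lemma coord_le_mxnorm a i : `|a ord0 i| <= `|a|.
Proof.
rewrite [leRHS]/Num.norm /= mx_normrE.
by apply/bigmax_geP; right => /=; exists (ord0, i).
Qed.

Lemma mxnorm_le_sqrt_sqv a : `|a| <= Num.sqrt (sqv a).
Proof.
rewrite [leLHS]/Num.norm /= mx_normrE.
apply/bigmax_leP; split => [|[i j] _ /=]; first exact: sqrtr_ge0.
rewrite (ord1 i) -sqrtr_sqr; apply: ler_wsqrtr; exact: coord_sqr_le_sqv.
Qed.

Lemma enorm_le_mxnorm a : enorm a <= n.+1%:R * `|a|.
Proof.
rewrite enormE -[X in _ <= X]ger0_norm ?mulr_ge0 // -sqrtr_sqr.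
apply: ler_wsqrtr; rewrite /sqv /dotv.
apply: (@le_trans _ _ (\sum_(i < n) `|a| ^+ 2)).
  apply: ler_sum => i _; rewrite -expr2 -real_normK ?num_real //.
  by rewrite lerXn2r ?nnegrE // coord_le_mxnorm.
rewrite sumr_const card_ord exprMn -[leLHS]mulr_natl.
apply: ler_wpM2r; first exact: sqr_ge0.
by rewrite -natrX ler_nat expnS; apply: leq_trans (leqnSn _) _; rewrite leq_pmulr.
Qed.

Lemma cvg_coord (s : nat -> V) a i :
  s @ \oo --> a -> (fun k => s k ord0 i) @ \oo --> a ord0 i.
Proof.
move=> /cvgrPdist_lt sa; apply/cvgrPdist_lt => e e0.
apply: filterS (sa e e0) => k; apply: le_lt_trans.
have -> : a ord0 i - s k ord0 i = (a - s k) ord0 i by rewrite !mxE.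
exact: coord_le_mxnorm.
Qed.

Lemma cvg_dotv (s r : nat -> V) a b : s @ \oo --> a -> r @ \oo --> b ->
  (fun k => dotv (s k) (r k)) @ \oo --> dotv a b.
Proof.
move=> sa rb; apply: cvg_big => // [|i _]; first exact: add_continuous.
by apply: cvgM; exact: cvg_coord.
Qed.

Definition convexv (C : set V) := forall a b (s : R),
  0 <= s <= 1 -> C a -> C b -> C ((1 - s) *: a + s *: b).

Lemma conv_hull_of_mem (A : set V) a : A a -> conv_hull A a.
Proof.
move=> Aa; exists 1%N, (fun=> 1), (fun=> a).
by rewrite !big_ord1 scale1r.
Qed.

Lemma conv_hull_convex (A : set V) : convexv (conv_hull A).
Proof.
move=> a b s /andP[s0 s1] [N1 [l1 [p1 [l10 [l11 [Ap1 ->]]]]]]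
  [N2 [l2 [p2 [l20 [l21 [Ap2 ->]]]]]].
exists (N1 + N2)%N.
exists (fun i => match fintype.split i with inl i1 => (1 - s) * l1 i1 | inr i2 => s * l2 i2 end).
exists (fun i => match fintype.split i with inl i1 => p1 i1 | inr i2 => p2 i2 end).
have e1 i : fintype.split (lshift N2 i) = inl i := unsplitK (inl i).
have e2 i : fintype.split (rshift N1 i) = inr i := unsplitK (inr i).
split; [|split; [|split]].
- by move=> i; case: fintype.split => j; apply: mulr_ge0; rewrite ?subr_ge0.
- rewrite big_split_ord /=.
  under eq_bigr do rewrite e1.
  under [X in _ + X]eq_bigr do rewrite e2.
  by rewrite -!mulr_sumr l11 l21 !mulr1 subrK.
- by move=> i; case: fintype.split.
- rewrite big_split_ord /=.
  under [in RHS]eq_bigr do rewrite e1.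
  under [X in _ = _ + X]eq_bigr do rewrite e2.
  by rewrite !scaler_sumr; congr (_ + _); apply: eq_bigr => i _; rewrite scalerA.
Qed.

End Euclidean.
Arguments dotv {R n}. Arguments sqv {R n}.

Section greedy_limit.
Variables (R : realType) (n : nat).
Local Notation V := 'rV[R]_n.

Definition stepsize (l : nat) : R := (l.+1%:R)^-1.

Lemma stepsize_gt0 l : 0 < stepsize l.
Proof. by rewrite invr_gt0. Qed.

Lemma stepsize_le1 l : stepsize l <= 1.
Proof. by rewrite invf_le1 ?ler1n. Qed.

Lemma stepsize_band (s : R) : 0 < s -> exists l, stepsize l <= s <= l.+1%:R.
Proof.
move=> s0; exists (Num.truncn (s + s^-1)).
have := truncnS_gt (s + s^-1); set L := (Num.truncn _).+1%:R => hL.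
have si0 : 0 < s^-1 by rewrite invr_gt0.
apply/andP; split; last by apply: ltW; apply: le_lt_trans hL; rewrite lerDl ltW.
rewrite /stepsize -/L -(invrK s) lef_pV2 ?posrE ?invr_gt0 ?ltr0n //.
by apply: ltW; apply: le_lt_trans hL; rewrite lerDr ltW.
Qed.

Variables (w : V) (u : nat -> V) (m : nat -> V).
Hypothesis beats_current : forall k, sqv (w - m k.+1) <= sqv (w - m k).
Hypothesis beats_midpoints : forall k b, (b <= k)%N ->
  sqv (w - m k.+1) <= sqv (w - 2^-1 *: (m k + m b)).
Hypothesis beats_moves : forall k j l, (j <= k)%N -> (l <= k)%N ->
  sqv (w - m k.+1) <= sqv (w - ((1 - stepsize l) *: m k + stepsize l *: u j)).

Let dist2 k := sqv (w - m k).

Lemma dist2_nonincreasing : nonincreasing_seq dist2.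
Proof. by apply/nonincreasing_seqP => k; exact: beats_current. Qed.

Lemma dist2_cvg : cvgn dist2.
Proof.
apply: nonincreasing_is_cvgn; first exact: dist2_nonincreasing.
by exists 0 => _ [k _ <-]; exact: sqv_ge0.
Qed.

Lemma dist2_ge_lim k : limn dist2 <= dist2 k.
Proof. exact: nonincreasing_cvgn_ge dist2_nonincreasing dist2_cvg k. Qed.

(* By the parallelogram law the midpoint comparisons make m Cauchy. *)
Lemma greedy_cauchy_bound k b : (b <= k)%N ->
  sqv (m k - m b) <= 4 * (dist2 b - limn dist2).
Proof.
move=> bk; rewrite (sqv_parallelogram w).
have := beats_midpoints bk; have := dist2_nonincreasing bk.
have := dist2_ge_lim k.+1; rewrite /dist2; lra.
Qed.

Lemma greedy_cvg : cvgn m.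
Proof.
apply: cauchy_cvg; apply: cauchy_exP => e e0.
have [N _ HN] : \forall k \near \oo, `|limn dist2 - dist2 k| < e ^+ 2 / 4.
  by move/cvgrPdist_lt : dist2_cvg; apply; rewrite divr_gt0 // exprn_gt0.
exists (m N); exists N => // k /= Nk.
rewrite -ball_normE /ball_ /=.
apply: le_lt_trans (mxnorm_le_sqrt_sqv _) _.
rewrite -(@ger0_norm _ e) ?ltW // -sqrtr_sqr ltr_sqrt ?exprn_gt0 //.
rewrite sqv_subC; apply: le_lt_trans (greedy_cauchy_bound Nk) _.
have := HN N (leqnn N); rewrite distrC ger0_norm ?subr_ge0 ?dist2_ge_lim //.
lra.
Qed.

Let p := limn m.

(* The moves towards u_j give, in the limit, a first-order condition. *)
Lemma greedy_limit_move_ineq j l :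
  2 * stepsize l * dotv (w - p) (u j - p) - stepsize l ^+ 2 * sqv (u j - p) <= 0.
Proof.
have gain : \forall k \near \oo, 2 * stepsize l * dotv (w - m k) (u j - m k)
    - stepsize l ^+ 2 * sqv (u j - m k) <= dist2 k - dist2 k.+1.
  exists (maxn j l) => // k /= hk.
  have := beats_moves (leq_trans (leq_maxl _ _) hk) (leq_trans (leq_maxr _ _) hk).
  rewrite sqv_segment /dist2; lra.
have mp : m @ \oo --> p := greedy_cvg.
apply: (ler_cvg_to _ _ gain).
  apply: cvgB; apply: cvgM; try apply: cvg_cst;
    by apply: cvg_dotv; apply: cvgB => //; exact: cvg_cst.
rewrite -(subrr (limn dist2)); apply: cvgB; first exact: dist2_cvg.
by rewrite (cvg_shiftS dist2); exact: dist2_cvg.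
Qed.

(* Letting the step length go to 0: p is the projection of w on the closed
   convex hull of the u_j. *)
Lemma greedy_limit_variational j : dotv (w - p) (u j - p) <= 0.
Proof.
have bound l : dotv (w - p) (u j - p) <= stepsize l * sqv (u j - p) / 2.
  have := greedy_limit_move_ineq j l; have := stepsize_gt0 l; nra.
have lim0 : (fun l => stepsize l * sqv (u j - p) / 2) @ \oo --> 0.
  rewrite -(mul0r (sqv (u j - p) / 2)); under eq_fun do rewrite -mulrA.
  by apply: cvgM; [exact: cvg_harmonic|exact: cvg_cst].
by apply: (ler_cvg_to (cvg_cst _) lim0); exact: nearW.
Qed.

End greedy_limit.

Section greedy_scheme.
Variables (R : realType) (n : nat) (T : Type).
Local Notation V := 'rV[R]_n.
Variables (u : nat -> T -> V) (w : T -> V).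

Definition closer (c a : T -> V) : T -> V :=
  fun t => if sqv (w t - c t) < sqv (w t - a t) then c t else a t.

Definition candidate (h : seq (T -> V)) (mk : T -> V)
    (i : nat + (nat * nat)) : T -> V :=
  match i with
  | inl b => fun t => 2^-1 *: (mk t + nth (u 0) h b t)
  | inr (j, l) => fun t => (1 - stepsize R l) *: mk t + stepsize R l *: u j t
  end.

Definition candidate_index (k : nat) : seq (nat + (nat * nat)) :=
  [seq inl b | b <- iota 0 k.+1] ++
  [seq inr jl | jl <- [seq (j, l) | j <- iota 0 k.+1, l <- iota 0 k.+1]].

Definition best_of (d : T -> V) (f : nat + (nat * nat) -> T -> V)
    (s : seq (nat + (nat * nat))) : T -> V :=
  foldr (fun i acc => closer (f i) acc) d s.

Fixpoint greedy_hist (k : nat) : seq (T -> V) :=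
  match k with
  | 0 => [:: u 0]
  | k'.+1 => let h := greedy_hist k' in let mk := last (u 0) h in
      rcons h (best_of mk (candidate h mk) (candidate_index k'))
  end.

Definition greedy k := last (u 0) (greedy_hist k).

Lemma size_greedy_hist k : size (greedy_hist k) = k.+1.
Proof. by elim: k => //= k IH; rewrite size_rcons IH. Qed.

Lemma greedyS k :
  greedy k.+1 = best_of (greedy k) (candidate (greedy_hist k) (greedy k)) (candidate_index k).
Proof. by rewrite /greedy /= last_rcons. Qed.

Lemma nth_greedy_hist k b : (b <= k)%N -> nth (u 0) (greedy_hist k) b = greedy b.
Proof.
elim: k b => [|k IH] b; first by rewrite leqn0 => /eqP ->.
rewrite leq_eqVlt => /orP[/eqP ->|bk].
  by rewrite /greedy /= nth_rcons size_greedy_hist ltnn eqxx last_rcons.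
by rewrite /= nth_rcons size_greedy_hist bk IH.
Qed.

Lemma closer_le c a t :
  sqv (w t - closer c a t) <= sqv (w t - c t) /\
  sqv (w t - closer c a t) <= sqv (w t - a t).
Proof. by rewrite /closer; case: ltP => h; split => //; exact: ltW. Qed.

Lemma best_of_le_default d f s t : sqv (w t - best_of d f s t) <= sqv (w t - d t).
Proof. by elim: s => //= i s IH; apply: le_trans IH; exact: (closer_le _ _ _).2. Qed.

Lemma best_of_le d f s t i : i \in s ->
  sqv (w t - best_of d f s t) <= sqv (w t - f i t).
Proof.
elim: s => //= j s IH; rewrite inE => /orP[/eqP ->|iS].
  exact: (closer_le _ _ _).1.
by apply: le_trans (IH iS); exact: (closer_le _ _ _).2.
Qed.

Lemma mem_candidate_midpoint k b : (b <= k)%N -> inl b \in candidate_index k.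
Proof.
move=> bk; rewrite mem_cat; apply/orP; left.
by rewrite mem_map ?mem_iota /= ?ltnS // => x y [->].
Qed.

Lemma mem_candidate_move k j l : (j <= k)%N -> (l <= k)%N ->
  inr (j, l) \in candidate_index k.
Proof.
move=> jk lk; rewrite mem_cat; apply/orP; right.
rewrite mem_map; last by move=> x y [->].
by apply/allpairsP; exists (j, l); rewrite !mem_iota /= !ltnS jk lk.
Qed.

Lemma greedy_beats_current t k : sqv (w t - greedy k.+1 t) <= sqv (w t - greedy k t).
Proof. by rewrite greedyS; exact: best_of_le_default. Qed.

Lemma greedy_beats_midpoints t k b : (b <= k)%N ->
  sqv (w t - greedy k.+1 t) <= sqv (w t - 2^-1 *: (greedy k t + greedy b t)).
Proof.
move=> bk; rewrite greedyS -(nth_greedy_hist bk).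
exact: (best_of_le _ _ _ (mem_candidate_midpoint bk)).
Qed.

Lemma greedy_beats_moves t k j l : (j <= k)%N -> (l <= k)%N ->
  sqv (w t - greedy k.+1 t) <=
  sqv (w t - ((1 - stepsize R l) *: greedy k t + stepsize R l *: u j t)).
Proof.
move=> jk lk; rewrite greedyS.
exact: (best_of_le _ _ _ (mem_candidate_move jk lk)).
Qed.

Lemma candidate_midpoint_le k b : inl b \in candidate_index k -> (b <= k)%N.
Proof.
by rewrite mem_cat => /orP[|] /mapP[x] // xk [->]; move: xk; rewrite mem_iota ltnS.
Qed.

Lemma best_of_invariant (P : (T -> V) -> Prop) d f s :
  (forall f g, P f -> P g -> P (closer f g)) ->
  P d -> (forall i, i \in s -> P (f i)) -> P (best_of d f s).
Proof.
move=> Pcloser Pd; elim: s => //= i s IH Pf.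
apply: Pcloser; first by apply: Pf; rewrite inE eqxx.
by apply: IH => i' i's; apply: Pf; rewrite inE i's orbT.
Qed.

Lemma greedy_invariant (P : (T -> V) -> Prop) :
  (forall j, P (u j)) ->
  (forall f g (s : R), 0 <= s <= 1 -> P f -> P g ->
     P (fun t => (1 - s) *: f t + s *: g t)) ->
  (forall f g, P f -> P g -> P (closer f g)) ->
  forall k, P (greedy k).
Proof.
move=> Pu Pcomb Pcloser.
suff H k b : (b <= k)%N -> P (greedy b) by move=> k; exact: (H k k).
elim: k b => [|k IH] b; first by rewrite leqn0 => /eqP ->; exact: Pu.
rewrite leq_eqVlt => /orP[/eqP ->|]; last by rewrite ltnS; exact: IH.
rewrite greedyS; apply: best_of_invariant => //; first exact: IH.
case=> [b' /candidate_midpoint_le b'k|[j l] _] /=; last first.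
  apply: Pcomb; [|exact: IH|exact: Pu].
  by rewrite (ltW (stepsize_gt0 _ _)) stepsize_le1.
have -> : (fun t => 2^-1 *: (greedy k t + nth (u 0) (greedy_hist k) b' t)) =
    (fun t => (1 - 2^-1) *: greedy k t + 2^-1 *: greedy b' t).
  by apply/funext => t; rewrite nth_greedy_hist //; apply/matrixP => i i'; rewrite !mxE; field.
by apply: Pcomb; [rewrite invr_ge0 ler0n invf_le1 ?ler1n|exact: IH|exact: IH].
Qed.

Lemma greedy_in_convex (C : set V) t : convexv C -> (forall j, C (u j t)) ->
  forall k, C (greedy k t).
Proof.
move=> cC Cu; apply: (greedy_invariant (P := fun f => C (f t))) => //.
- by move=> f g s s01 Cf Cg; exact: cC.
- by move=> f g Cf Cg; rewrite /closer; case: ifP.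
Qed.

End greedy_scheme.

Section greedy_measurable.
Variables (d : measure_display) (T : measurableType d) (R : realType) (n : nat).
Local Notation V := 'rV[R]_n.

Lemma vmeasurable_comb (f g : T -> V) (a b : R) : vmeasurable f -> vmeasurable g ->
  vmeasurable (fun t => a *: f t + b *: g t).
Proof.
move=> mf mg i.
rewrite (_ : (fun t => _) = (fun t => a * f t ord0 i + b * g t ord0 i)); last first.
  by apply/funext => t; rewrite !mxE.
by apply: measurable_funD; apply: measurable_funM => //; exact: measurable_cst.
Qed.

Lemma vmeasurableB (f g : T -> V) : vmeasurable f -> vmeasurable g ->
  vmeasurable (fun t => f t - g t).
Proof.
move=> mf mg i.
rewrite (_ : (fun t => _) = (fun t => f t ord0 i - g t ord0 i)); last first.
  by apply/funext => t; rewrite !mxE.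
exact: measurable_funB.
Qed.

Lemma measurable_dotv (f g : T -> V) : vmeasurable f -> vmeasurable g ->
  measurable_fun setT (fun t => dotv (f t) (g t)).
Proof. by move=> mf mg; apply: measurable_sum => i; exact: measurable_funM. Qed.

Lemma vmeasurable_closer (w c a : T -> V) : vmeasurable w -> vmeasurable c ->
  vmeasurable a -> vmeasurable (closer w c a).
Proof.
move=> mw mc ma i.
rewrite (_ : (fun t => _) = (fun t => if sqv (w t - c t) < sqv (w t - a t)
    then c t ord0 i else a t ord0 i)); last first.
  by apply/funext => t; rewrite /closer; case: ifP.
apply: measurable_fun_ifT => //.
by apply: measurable_fun_ltr; apply: measurable_dotv; apply: vmeasurableB.
Qed.

Lemma vmeasurable_greedy (u : nat -> T -> V) (w : T -> V) :
  (forall j, vmeasurable (u j)) -> vmeasurable w ->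
  forall k, vmeasurable (greedy u w k).
Proof.
move=> mu mw; apply: greedy_invariant => // [f g s _|f g]; first exact: vmeasurable_comb.
exact: vmeasurable_closer.
Qed.

End greedy_measurable.

Section greedy_projection.
Variables (R : realType) (n : nat) (T : Type).
Variables (u : nat -> T -> 'rV[R]_n) (w : T -> 'rV[R]_n).

(* The pointwise limit of the greedy scheme: the projection of w t on the
   closed convex hull of the u_j t. *)
Definition greedy_proj t : 'rV[R]_n := limn (fun k => greedy u w k t).

Lemma greedy_proj_cvg t : (fun k => greedy u w k t) @ \oo --> greedy_proj t.
Proof.
apply: (greedy_cvg (w := w t)) => k.
- exact: greedy_beats_current.
- exact: greedy_beats_midpoints.
Qed.

Lemma greedy_proj_variational t j :
  dotv (w t - greedy_proj t) (u j t - greedy_proj t) <= 0.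
Proof.
apply: (greedy_limit_variational (u := fun j => u j t)) => k.
- exact: greedy_beats_current.
- exact: greedy_beats_midpoints.
- exact: greedy_beats_moves.
Qed.

End greedy_projection.

Lemma vmeasurable_greedy_proj d (T : measurableType d) (R : realType) (n : nat)
  (u : nat -> T -> 'rV[R]_n) (w : T -> 'rV[R]_n) :
  (forall j, vmeasurable (u j)) -> vmeasurable w -> vmeasurable (greedy_proj u w).
Proof.
move=> mu mw i; apply: (measurable_fun_cvg (h := fun k t => greedy u w k t ord0 i)).
  by move=> k; exact: vmeasurable_greedy.
by move=> t _; apply: cvg_coord; exact: greedy_proj_cvg.
Qed.

Section L1_testing.
Variables (d : measure_display) (T : measurableType d) (R : realType)
  (mu : {measure set T -> \bar R}) (n : nat).
Local Notation V := 'rV[R]_n.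

Lemma vintegrable_vmeasurable (f : T -> V) : vintegrable mu f -> vmeasurable f.
Proof. by move=> fi i; apply/measurable_EFinP; exact: measurable_int (fi i). Qed.

Lemma vintegrableB (f g : T -> V) : vintegrable mu f -> vintegrable mu g ->
  vintegrable mu (fun t => f t - g t).
Proof.
move=> fi gi i.
rewrite (_ : (fun t => _) = ((fun t => (f t ord0 i)%:E) \- (fun t => (g t ord0 i)%:E))%E).
  exact: integrableB.
by apply/funext => t /=; rewrite !mxE EFinB.
Qed.

Lemma measurable_enorm (f : T -> V) : vmeasurable f ->
  measurable_fun setT (fun t => enorm (f t)).
Proof.
move=> mf; rewrite /enorm; apply: measurableT_comp.
  exact: continuous_measurable_fun (@sqrt_continuous R).
by apply: measurable_sum => i; exact: measurable_funX.
Qed.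

Section test_functional.
Variables (h : T -> V) (B : R).
Hypotheses (mh : vmeasurable h) (B0 : 0 <= B) (hB : forall t i, `|h t ord0 i| <= B).

Lemma integrable_dotv (f : T -> V) : vintegrable mu f ->
  mu.-integrable setT (EFin \o (fun t => dotv (h t) (f t))).
Proof.
move=> fi.
rewrite (_ : _ \o _ = (fun t => \sum_(i < n) (h t ord0 i * f t ord0 i)%:E)%E); last first.
  by apply/funext => t /=; rewrite sumEFin.
apply: integrable_sum => // i _.
rewrite (_ : (fun t => _) = ((EFin \o (fun t => h t ord0 i)) \* (fun t => (f t ord0 i)%:E))%E).
  apply: integrableMr => //.
  exists B; split; first exact: num_real.
  by move=> M BM t _ /=; apply: le_trans (hB t i) (ltW BM).
by apply/funext => t; rewrite /= EFinM.
Qed.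

Definition test_functional (f : T -> V) : R :=
  Rintegral mu setT (fun t => dotv (h t) (f t)).

Lemma test_functional_dual : L1_dual mu test_functional.
Proof.
split; [|split].
- move=> f g fi gi; rewrite /test_functional -RintegralD //; try exact: integrable_dotv.
  by apply: eq_Rintegral => t _; rewrite dotvDr.
- move=> a f fi; rewrite /test_functional -RintegralZl //; last exact: integrable_dotv.
  by apply: eq_Rintegral => t _; rewrite dotvZr.
exists (n%:R * B) => f fi.
have mf := vintegrable_vmeasurable fi.
rewrite EFin_normr_Rintegral //; last exact: integrable_dotv.
apply: le_trans (le_abse_integral _ _ _) _ => //.
  by apply/measurable_EFinP; exact: measurable_dotv.
rewrite -ge0_integralZl_EFin //; first last.
- by rewrite mulr_ge0.
- by apply/measurable_EFinP; exact: measurable_enorm.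
- by move=> t _; rewrite lee_fin enormE sqrtr_ge0.
apply: ge0_le_integral => //.
- by apply: measurableT_comp => //; apply/measurable_EFinP; exact: measurable_dotv.
- apply/measurable_EFinP; apply: measurable_funM; first exact: measurable_cst.
  exact: measurable_enorm.
- by move=> t _; rewrite lee_fin; exact: dotv_le_enorm.
Qed.

End test_functional.

Lemma measure_le_Rintegral (E : set T) (G : T -> R) (c : R) :
  measurable E -> 0 < c -> mu.-integrable setT (EFin \o G) ->
  (forall t, c * \1_E t <= G t) ->
  mu E \is a fin_num /\ c * fine (mu E) <= Rintegral mu setT G.
Proof.
move=> mE c0 Gint cG.
have mG : measurable_fun setT G by apply/measurable_EFinP; exact: measurable_int Gint.
have cE_ge0 t : 0 <= c * \1_E t by apply: mulr_ge0; [exact: ltW|rewrite indicE].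
have mcE : measurable_fun setT (fun t => c * \1_E t).
  by apply: measurable_funM; [exact: measurable_cst|exact: measurable_indic].
have cE : (\int[mu]_t (c * \1_E t)%:E = c%:E * mu E)%E.
  under eq_integral do rewrite EFinM.
  rewrite ge0_integralZl_EFin ?integral_indic ?setIT ?(ltW c0) //.
  by apply/measurable_EFinP; exact: measurable_indic.
have finE : mu E \is a fin_num.
  have cEle : (c%:E * mu E <= \int[mu]_t (G t)%:E)%E.
    rewrite -cE; apply: ge0_le_integral => //.
    - by move=> t _; rewrite lee_fin.
    - exact/measurable_EFinP.
    - exact/measurable_EFinP.
    - by move=> t _; rewrite lee_fin.
  have Gfin : (\int[mu]_t (G t)%:E < +oo)%E.
    have /integrableP[_] := Gint; apply: le_lt_trans.
    by apply: le_trans (lee_abs _) (le_abse_integral _ _ _) => //; exact/measurable_EFinP.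
  rewrite ge0_fin_numE ?measure_ge0 //.
  move: (le_lt_trans cEle Gfin); have := leey (mu E).
  rewrite le_eqVlt => /orP[/eqP ->|//].
  by rewrite mulr_infty gtr0_sg // mul1e ltxx.
split => //.
have cEint : mu.-integrable setT (EFin \o (fun t => c * \1_E t)).
  apply/integrableP; split; first exact/measurable_EFinP.
  rewrite (eq_integral (fun t => (c * \1_E t)%:E)); last by move=> t _ /=; rewrite ger0_norm.
  by rewrite cE lte_mul_pinfty ?lee_fin ?(ltW c0) // -ge0_fin_numE.
have -> : c * fine (mu E) = Rintegral mu setT (fun t => c * \1_E t).
  by rewrite /Rintegral cE fineM.
exact: le_Rintegral.
Qed.

(* The separation argument: if, on E, the bounded vector field v has
   |v|^2 >= c > 0 and <v, w - u_j> >= |v|^2 for every j, then testing the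
   weak convergence u_j -> w against 1_E v forces mu(E) = 0. *)
Lemma null_of_weak_separation (u : nat -> T -> V) (w v : T -> V) (E : set T) (c B : R) :
  measurable E -> vmeasurable v -> 0 <= B ->
  (forall t, E t -> forall i, `|v t ord0 i| <= B) ->
  0 < c -> (forall t, E t -> c <= sqv (v t)) ->
  (forall j t, E t -> sqv (v t) <= dotv (v t) (w t - u j t)) ->
  (forall j, vintegrable mu (u j)) -> vintegrable mu w ->
  (forall phi, L1_dual mu phi -> (fun j => phi (u j)) @ \oo --> phi w) ->
  mu E = 0.
Proof.
move=> mE mv B0 vB c0 cv vsep ui wi weak.
pose h t := \1_E t *: v t.
have hB t i : `|h t ord0 i| <= B.
  rewrite /h mxE indicE; have [tE|tE] := boolP (t \in E).
    by rewrite mul1r; apply: vB; exact: set_mem.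
  by rewrite mul0r normr0.
have mh : vmeasurable h.
  move=> i; rewrite (_ : (fun t => _) = (fun t => \1_E t * v t ord0 i)).
    by apply: measurable_funM; [exact: measurable_indic|exact: mv].
  by apply/funext => t; rewrite mxE.
pose phi := test_functional h.
have gap j : phi w - phi (u j) = Rintegral mu setT (fun t => dotv (h t) (w t - u j t)).
  rewrite /phi /test_functional -RintegralB //; try exact: (integrable_dotv mh hB).
  by apply: eq_Rintegral => t _; rewrite dotvBr.
have gap_ge j t : c * \1_E t <= dotv (h t) (w t - u j t).
  rewrite /h /dotv; under eq_bigr do rewrite mxE -mulrA; rewrite -mulr_sumr indicE.
  case: (boolP (t \in E)) => [tE|_]; last by rewrite mulr0 mul0r.
  by rewrite mulr1 mul1r; apply: le_trans (cv t (set_mem tE)) (vsep j t (set_mem tE)).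
have lb j : c * fine (mu E) <= phi w - phi (u j).
  rewrite gap; apply: (measure_le_Rintegral mE c0 _ (gap_ge j)).2.
  by apply: (integrable_dotv mh hB); exact: vintegrableB.
have [finE _] := measure_le_Rintegral mE c0
  (integrable_dotv mh hB (vintegrableB wi (ui 0%N))) (gap_ge 0%N).
have gap0 : (fun j => phi w - phi (u j)) @ \oo --> 0.
  rewrite -(subrr (phi w)); apply: cvgB; first exact: cvg_cst.
  exact: weak (test_functional_dual mh B0 hB).
have : c * fine (mu E) <= 0 by apply: (ler_cvg_to (cvg_cst _) gap0); exact: nearW.
rewrite pmulr_rle0 // => muE0.
apply/le_anti; rewrite measure_ge0 andbT -(fineK finE).
by rewrite lee_fin.
Qed.

Lemma projection_residual_null (u : nat -> T -> V) (w p : T -> V) :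
  (forall j, vintegrable mu (u j)) -> vintegrable mu w ->
  (forall phi, L1_dual mu phi -> (fun j => phi (u j)) @ \oo --> phi w) ->
  vmeasurable p -> (forall j t, dotv (w t - p t) (u j t - p t) <= 0) ->
  {ae mu, forall t, p t = w t}.
Proof.
move=> ui wi weak mp var.
pose v t := w t - p t.
have mv : vmeasurable v := vmeasurableB (vintegrable_vmeasurable wi) mp.
pose E l := (fun t => sqv (v t)) @^-1` `[stepsize R l, l.+1%:R].
have mE l : measurable (E l).
  by rewrite -[E l]setTI; apply: measurable_dotv => //; exact: measurable_itv.
have E0 l : mu (E l) = 0.
  apply: (null_of_weak_separation (c := stepsize R l) (B := l.+1%:R) (mE l) mv _ _ _ _ _ ui wi weak).
  - by [].
  - move=> t; rewrite /E /= in_itv /= => /andP[_ vl] i.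
    by apply: coord_le_of_sqv_le vl; rewrite ler1n.
  - exact: stepsize_gt0.
  - by move=> t; rewrite /E /= in_itv /= => /andP[].
  - move=> j t _; have := var j t; rewrite /v => hv.
    by rewrite (dotv_shiftr _ (w t) _ (p t)) /sqv; lra.
have notE : {ae mu, forall t, forall l, ~ E l t}.
  by apply: ae_foralln => l; exists (E l); split => // t /=; exact: contrapT.
apply: filterS notE => t notEt.
have v0 : sqv (v t) = 0.
  apply/eqP; rewrite eq_le sqv_ge0 andbT leNgt; apply/negP => /stepsize_band[l band].
  by apply: (notEt l); rewrite /E /= in_itv /=.
by apply/eqP; rewrite eq_sym -subr_eq0 -/(v t) (sqv_eq0 v0).
Qed.

End L1_testing.

Lemma conv_infty_of_tail_limits (R : realType) (m n : nat)
  (F : 'rV[R]_m -> set 'rV[R]_n) (xs : nat -> 'rV[R]_m) (x0 : 'rV[R]_m)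
  (ys : nat -> 'rV[R]_n) (y0 : 'rV[R]_n) (M : nat -> nat -> 'rV[R]_n) :
  xs @ \oo --> x0 -> (forall k, F (xs k) (ys k)) ->
  (forall N, M N @ \oo --> y0) ->
  (forall N (C : set 'rV[R]_n), convexv C -> (forall j, C (ys (j + N)%N)) ->
     forall j, C (M N j)) ->
  conv_infty F x0 y0.
Proof.
move=> xs_cvg ysF M_cvg M_conv.
pose A k := conv_hull (svimage F (eball x0 (k.+1%:R)^-1)).
have near_y0 k : exists z, A k z /\ `|y0 - z| < (k.+1%:R)^-1.
  have [N _ xsN] : \forall j \near \oo, `|x0 - xs j| < (k.+1%:R)^-1 / m.+1%:R.
    by move/cvgrPdist_lt : xs_cvg; apply; rewrite divr_gt0.
  have tailA j : A k (ys (j + N)%N).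
    apply: conv_hull_of_mem; exists (xs (j + N)%N); last exact: ysF.
    rewrite /eball /=; apply: le_lt_trans (enorm_le_mxnorm _) _.
    by rewrite distrC -ltr_pdivlMl // mulrC; apply: xsN; exact: leq_addl.
  have [J _ MJ] : \forall j \near \oo, `|y0 - M N j| < (k.+1%:R)^-1.
    by move/cvgrPdist_lt: (M_cvg N); apply; rewrite invr_gt0.
  exists (M N J); split; last exact: (MJ J (leqnn J)).
  exact: M_conv (@conv_hull_convex _ _ _) tailA J.
have [z hz] := choice near_y0.
exists id, z; split => //; split => [j|]; first exact: (hz j).1.
apply/cvgrPdist_lt => e e0.
have /cvgrPdist_lt /(_ e e0) := @cvg_harmonic R.
apply: filterS => k; rewrite sub0r normrN /= ger0_norm ?invr_ge0 // => ke.
exact: lt_trans (hz k).2 ke.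
Qed.

Theorem theorem4p9 (d : measure_display) (T : measurableType d) (R : realType)
  (mu : {measure set T -> \bar R}) (m n : nat)
  (F : 'rV[R]_m -> set 'rV[R]_n)
  (x_ : nat -> T -> 'rV[R]_m) (y_ : nat -> T -> 'rV[R]_n)
  (x : T -> 'rV[R]_m) (y : T -> 'rV[R]_n) :
  (forall k, vmeasurable (x_ k)) ->
  (forall k, vmeasurable (y_ k)) ->
  {ae mu, forall t, (fun k => x_ k t) @ \oo --> x t} ->
  weak_L1_cvg mu y_ y ->
  (forall k, {ae mu, forall t, F (x_ k t) (y_ k t)}) ->
  {ae mu, forall t, conv_infty F (x t) (y t)}.
Proof.
move=> _ my x_cvg [yi [yint weak]] yF.
pose u N j := y_ (j + N)%N.
have proj_y N : {ae mu, forall t, greedy_proj (u N) y t = y t}.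
  apply: (projection_residual_null (u := u N)) => //.
  - by move=> j; exact: yi.
  - by move=> phi hphi; have := weak phi hphi; rewrite -(cvg_shiftn N).
  - apply: vmeasurable_greedy_proj; last exact: vintegrable_vmeasurable yint.
    by move=> j; exact: my.
  - by move=> j t; exact: greedy_proj_variational.
have yF_all : {ae mu, forall t, forall k, F (x_ k t) (y_ k t)} by exact: ae_foralln.
apply: filterS (filterI x_cvg (filterI yF_all (ae_foralln proj_y))).
move=> t [xt [yFt projt]].
apply: (conv_infty_of_tail_limits (M := fun N j => greedy (u N) y j t) xt yFt).
- by move=> N; rewrite -(projt N); exact: greedy_proj_cvg.
- by move=> N C convC tailC; exact: greedy_in_convex.
Qed.
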